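(* Let $f:[0,\infty)\to[0,\infty)$ be a continuous and non-decreasing function, and let $(x_N)_{N\in\mathbb{N}}$ be a sequence in $[0,1)$. Suppose there exist some $k\in\mathbb{N}$ and infinitely many $N\in\mathbb{N}$ such that the finite point set $x_1,\ldots,x_N$ has at most $k$ distinct gap lengths. Then $(x_N)_{N\in\mathbb{N}}$ does not have $f$-pair correlations; that is, it is not the case that \[ \lim_{N\to\infty}\frac{1}{N}\,\#\left\{1\le i\neq j\le N \;\middle|\; \|x_i-x_j\|\le \frac{s}{N}\right\} = f(s) \] holds for all $s\ge 0$.
   Context: Points of $[0,1)$ are regarded as points of the torus $\mathbb{T}^1=[0,1]/\sim$ (with $0$ and $1$ identified). For $x\in\mathbb{R}$, $\|x\|=\min\{|x-z| : z\in\mathbb{Z}\}$ denotes the distance to the nearest integer. For $s\ge 0$ and $N\in\mathbb{N}$, set $R(s,N)=\#\{1\le i\neq j\le N : \|x_i-x_j\|\le s/N\}$ (counting ordered pairs of distinct indices). A sequence has $f$-pair correlations if $\lim_{N\to\infty}\frac1N R(s,N)=f(s)$ for all $s\ge0$. The gap lengths of a finite point set $x_1,\ldots,x_N$ in $\mathbb{T}^1$ are the distances between neighboring elements on the circle: if $y_1\le y_2\le\cdots\le y_N$ is the nondecreasing rearrangement of $x_1,\ldots,x_N$ (repeated points allowed, so a gap length may be $0$), the gap lengths are the values $\|y_{i+1}-y_i\|$ for $1\le i\le N$, where $y_{N+1}:=y_1$. *)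

From Stdlib Require Import Reals Lra Lia List Permutation Sorting.Sorted.
From Coquelicot Require Import Coquelicot.
Open Scope R_scope.

(* ||x|| : distance from x to the nearest integer.  With n = floor x
   (Stdlib's Int_part), the nearest integers are n and n+1, so the distance
   is min (x - n) (n + 1 - x). *)
Definition dist_int (x : R) : R :=
  Rmin (x - IZR (Int_part x)) (IZR (Int_part x) + 1 - x).

(* R(s,N) = #{ (i,j) : 1 <= i, j <= N, i <> j, ||x_i - x_j|| <= s/N }
   (ordered pairs).  The sequence is x : nat -> R, indexed from 1. *)
Definition pair_count (x : nat -> R) (s : R) (N : nat) : nat :=
  length (filter
    (fun p : nat * nat =>
       if Nat.eq_dec (fst p) (snd p) then false
       else if Rle_dec (dist_int (x (fst p) - x (snd p))) (s / INR N)
            then true else false)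
    (list_prod (seq 1 N) (seq 1 N))).

Definition has_f_pair_correlations (f : R -> R) (x : nat -> R) : Prop :=
  forall s : R, 0 <= s ->
    is_lim_seq (fun N : nat => INR (pair_count x s N) / INR N) (f s).

(* Gap lengths of x_1,...,x_N given a nondecreasing rearrangement y
   (a list of length N): the values ||y_{i+1} - y_i||, i = 1..N, with
   y_{N+1} = y_1 (0-based: i < N, successor index (i+1) mod N). *)
Definition gap (y : list R) (i : nat) : R :=
  dist_int (nth ((i + 1) mod length y) y 0 - nth i y 0).

(* x_1,...,x_N has at most k distinct gap lengths: for the nondecreasing
   rearrangement y of x_1..x_N, all gap lengths lie in a list of at most
   k values.  (The nondecreasing rearrangement is unique, so the
   existential over y is harmless.) *)
Definition at_most_k_gap_lengths (x : nat -> R) (N k : nat) : Prop :=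
  exists y : list R,
    Permutation y (map x (seq 1 N)) /\ Sorted Rle y /\
    exists L : list R, (length L <= k)%nat /\
      forall i : nat, (i < N)%nat -> In (gap y i) L.

(* Sort x_1, ..., x_N into a_0 <= ... <= a_(N-1).  Every window of M + 1 equal consecutive
   values contributes M pairs to R(0,N) = O(N), so for M > 4 (f(0) + 1) more than N/(2M) of the
   steps a_t <= a_(t+1) are strict.  Their gaps take at most k values, so some gap v > 0 occurs
   m > N/c times, where c = 2M(k+1); as these m steps fit into [0,1), the scale N v is at most c.
   All m pairs (a_(t+1), a_t) enter R(s,N) exactly when s crosses N v, so R(.,N)/N jumps by at
   least 1/c inside (0, c].  For large N this contradicts convergence to f on a finite grid of
   scales together with the uniform continuity of f on [0, c + 1]. *)

From Stdlib Require Import Reals List.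
From Coquelicot Require Import Coquelicot.
From Stdlib Require Import Lra Lia Permutation Sorting.Sorted.
Open Scope R_scope.
Open Scope bool_scope.

Definition count {A : Type} (p : A -> bool) (l : list A) : nat := length (filter p l).

Section Counting.

Context {A : Type}.
Implicit Types (p q : A -> bool) (l : list A).

Lemma count_app p l1 l2 : count p (l1 ++ l2) = (count p l1 + count p l2)%nat.
Proof. unfold count. now rewrite filter_app, length_app. Qed.

Lemma count_ext p q l : (forall z, p z = q z) -> count p l = count q l.
Proof. intros Hpq. unfold count. now rewrite (filter_ext p q Hpq). Qed.

Lemma count_le p q l :
  (forall z, In z l -> p z = true -> q z = true) -> (count p l <= count q l)%nat.
Proof.
  unfold count. induction l as [|z l IH]; simpl; intros Hpq; [lia|].
  specialize (IH (fun w Hw => Hpq w (or_intror Hw))).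
  specialize (Hpq z (or_introl eq_refl)).
  destruct (p z), (q z); simpl; lia.
Qed.

Lemma count_split p q l : (forall z, p z = true -> q z = true) ->
  count q l = (count p l + count (fun z => q z && negb (p z)) l)%nat.
Proof.
  intros Hpq. unfold count. induction l as [|z l IH]; simpl; [lia|].
  specialize (Hpq z). destruct (p z), (q z); simpl; rewrite ?IH; lia.
Qed.

Lemma count_orb p q l : (count (fun z => p z || q z) l <= count p l + count q l)%nat.
Proof.
  unfold count. induction l as [|z l IH]; simpl; [lia|]. destruct (p z), (q z); simpl; lia.
Qed.

Lemma count_negb p l : (count p l + count (fun z => negb (p z)) l)%nat = length l.
Proof. apply filter_length. Qed.

Lemma count_pos_exists p l : (0 < count p l)%nat -> exists z, In z l /\ p z = true.
Proof.
  unfold count. destruct (filter p l) as [|z l'] eqn:E; simpl; [lia|]. intros _.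
  exists z. apply filter_In. rewrite E. now left.
Qed.

Lemma count_ge_NoDup p l S : NoDup S -> (forall z, In z S -> In z l /\ p z = true) ->
  (length S <= count p l)%nat.
Proof. intros HS Hin. apply NoDup_incl_length; auto. intros z Hz. now apply filter_In, Hin. Qed.

End Counting.

Lemma NoDup_list_prod {A B : Type} (l : list A) (l' : list B) :
  NoDup l -> NoDup l' -> NoDup (list_prod l l').
Proof.
  induction 1 as [|u l Hu Hl IH]; intros Hl'; simpl; [constructor|].
  apply NoDup_app; auto.
  - apply NoDup_map_NoDup_ForallPairs; auto. intros v w _ _ E. now injection E.
  - intros [v w] H1 H2. apply in_map_iff in H1. destruct H1 as [w' [E _]].
    injection E; intros; subst. apply in_prod_iff in H2. tauto.
Qed.

Lemma count_seq_shift (p : nat -> bool) M K s :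
  count (fun i => p (i + M)%nat) (seq s K) = count p (seq (s + M) K).
Proof.
  revert s. induction K as [|K IH]; intros s; [reflexivity|].
  unfold count in *. simpl. replace (S (s + M)) with (S s + M)%nat by lia.
  destruct (p (s + M)%nat); simpl; now rewrite IH.
Qed.

Lemma count_seq_le (p : nat -> bool) s n m : (n <= m)%nat ->
  (count p (seq s n) <= count p (seq s m))%nat.
Proof. intros Hnm. replace m with (n + (m - n))%nat by lia. rewrite seq_app, count_app. lia. Qed.

Section Pigeonhole.

Context {A B : Type} (eq_dec : forall u v : B, {u = v} + {u <> v}).

Definition eqb_dec (u v : B) : bool := if eq_dec u v then true else false.

Lemma pigeonhole_count (T : list A) (e : A -> bool) (g : A -> B) (L : list B) :
  (forall t, In t T -> e t = true -> In (g t) L) ->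
  count e T = 0%nat \/ exists v, In v L /\
    (count e T <= length L * count (fun t => e t && eqb_dec (g t) v) T)%nat.
Proof.
  revert e. induction L as [|v L IH]; intros e He.
  - left. destruct (count e T) eqn:E; [reflexivity|].
    destruct (count_pos_exists e T) as [t [Ht Het]]; [lia|]. destruct (He t Ht Het).
  - set (ev := fun t => e t && eqb_dec (g t) v).
    set (e' := fun t => e t && negb (eqb_dec (g t) v)).
    assert (Hsplit : count e T = (count ev T + count e' T)%nat).
    { rewrite (count_split ev e); [|intros z; unfold ev; now destruct (e z)].
      f_equal. apply count_ext. intros z. unfold ev, e'. now destruct (e z). }
    destruct (IH e') as [H0|[w [Hw Hc]]].
    + intros t Ht Het. unfold e' in Het. apply andb_prop in Het. destruct Het as [Het Hne].
      destruct (He t Ht Het) as [E|E]; auto. unfold eqb_dec in Hne.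
      destruct (eq_dec (g t) v); [discriminate | congruence].
    + right; exists v. split; [now left|]. simpl length. fold ev. nia.
    + set (ew := fun t => e t && eqb_dec (g t) w).
      assert (Hle : (count (fun t => e' t && eqb_dec (g t) w) T <= count ew T)%nat).
      { apply count_le. intros z _. unfold e', ew.
        now destruct (e z), (eqb_dec (g z) v), (eqb_dec (g z) w). }
      destruct (Nat.le_gt_cases (count ew T) (count ev T)).
      * right; exists v. split; [now left|]. simpl length. fold ev. nia.
      * right; exists w. split; [now right|]. simpl length. fold ew. nia.
Qed.

End Pigeonhole.

Lemma count_steps_telescope (a : nat -> R) (p : nat -> bool) (v : R) n :
  (forall t, (t < n)%nat -> a t <= a (S t)) ->
  (forall t, (t < n)%nat -> p t = true -> v <= a (S t) - a t) ->
  INR (count p (seq 0 n)) * v <= a n - a 0%nat.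
Proof.
  induction n as [|n IH]; intros Hmono Hstep; [simpl; lra|].
  rewrite seq_S, count_app, plus_INR.
  specialize (IH (fun t Ht => Hmono t ltac:(lia)) (fun t Ht => Hstep t ltac:(lia))).
  specialize (Hmono n ltac:(lia)). specialize (Hstep n ltac:(lia)).
  unfold count at 2; simpl. destruct (p n); simpl; [specialize (Hstep eq_refl)|]; lra.
Qed.

Definition changes_at (a : nat -> R) (t : nat) : bool :=
  if Req_EM_T (a t) (a (S t)) then false else true.

Definition num_changes (a : nat -> R) (N : nat) : nat := count (changes_at a) (seq 0 (N - 1)).

(* Each change at [t] lies in at most [M] of the windows [seq i M]. *)
Lemma count_windows_with_change a M K :
  (count (fun i => existsb (changes_at a) (seq i M)) (seq 0 K)
     <= M * count (changes_at a) (seq 0 (K + M - 1)))%nat.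
Proof.
  induction M as [|M IH].
  - rewrite (count_ext _ (fun _ => false)) by reflexivity.
    unfold count. rewrite filter_false. simpl. lia.
  - rewrite (count_ext _ (fun i => existsb (changes_at a) (seq i M) || changes_at a (i + M)%nat)).
    2:{ intros i. rewrite seq_S, existsb_app. simpl. now rewrite Bool.orb_false_r. }
    eapply Nat.le_trans; [apply count_orb|].
    rewrite count_seq_shift. simpl (0 + M)%nat.
    assert (H1 : (count (changes_at a) (seq 0 (K + M - 1))
                  <= count (changes_at a) (seq 0 (K + S M - 1)))%nat)
      by (apply count_seq_le; lia).
    assert (H2 : (count (changes_at a) (seq M K)
                  <= count (changes_at a) (seq 0 (K + S M - 1)))%nat).
    { replace (K + S M - 1)%nat with (M + K)%nat by lia. rewrite seq_app, count_app. simpl. lia. }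
    nia.
Qed.

Lemma window_constant a M i : existsb (changes_at a) (seq i M) = false ->
  forall r, (r <= M)%nat -> a (i + r)%nat = a i.
Proof.
  intros Hw r. induction r as [|r IH]; intros Hr; [now rewrite Nat.add_0_r|].
  rewrite <- IH by lia. replace (i + S r)%nat with (S (i + r)) by lia.
  assert (Hc : changes_at a (i + r) = false).
  { destruct (changes_at a (i + r)) eqn:E; [|reflexivity].
    rewrite <- Hw. symmetry. apply existsb_exists.
    exists (i + r)%nat. split; [apply in_seq; lia | exact E]. }
  unfold changes_at in Hc. now destruct (Req_EM_T (a (i + r)%nat) (a (S (i + r)))).
Qed.

Definition close_pairs (G : R -> R -> bool) (a : nat -> R) (n0 N : nat) : nat :=
  count (fun p : nat * nat =>
           if Nat.eq_dec (fst p) (snd p) then false else G (a (fst p)) (a (snd p)))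
        (list_prod (seq n0 N) (seq n0 N)).

Definition pair_close (s : R) (N : nat) (u v : R) : bool :=
  if Rle_dec (dist_int (u - v)) (s / INR N) then true else false.

Definition pair_between (s1 s2 : R) (N : nat) (u v : R) : bool :=
  pair_close s2 N u v && negb (pair_close s1 N u v).

Lemma pair_count_close_pairs x s N : pair_count x s N = close_pairs (pair_close s N) x 1 N.
Proof. reflexivity. Qed.

Lemma close_pairs_reindex (x a : nat -> R) (sigma : nat -> nat) N G :
  (forall i, (i < N)%nat -> (sigma i < N)%nat) ->
  (forall i j, (i < N)%nat -> (j < N)%nat -> sigma i = sigma j -> i = j) ->
  (forall i, (i < N)%nat -> a i = x (S (sigma i))) ->
  (close_pairs G a 0 N <= close_pairs G x 1 N)%nat.
Proof.
  intros Hbound Hinj Ha. unfold close_pairs.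
  set (p := fun q : nat * nat =>
              if Nat.eq_dec (fst q) (snd q) then false else G (a (fst q)) (a (snd q))).
  set (lift := fun q : nat * nat => (S (sigma (fst q)), S (sigma (snd q)))).
  eapply Nat.le_trans;
    [| apply count_ge_NoDup with (S := map lift (filter p (list_prod (seq 0 N) (seq 0 N))))].
  - unfold count. now rewrite length_map.
  - apply NoDup_map_NoDup_ForallPairs; [|apply NoDup_filter, NoDup_list_prod; apply seq_NoDup].
    intros [i j] [i' j'] H1 H2 E. apply filter_In in H1, H2.
    destruct H1 as [H1 _], H2 as [H2 _]. apply in_prod_iff in H1, H2. rewrite !in_seq in H1, H2.
    unfold lift in E; simpl in E. injection E; intros. f_equal; apply Hinj; lia.
  - intros z Hz. apply in_map_iff in Hz. destruct Hz as [[i j] [<- Hin]].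
    apply filter_In in Hin. destruct Hin as [Hin Hp]. apply in_prod_iff in Hin.
    rewrite !in_seq in Hin. unfold p, lift in *; simpl in *. split.
    + apply in_prod_iff; rewrite !in_seq. pose proof (Hbound i); pose proof (Hbound j). lia.
    + destruct (Nat.eq_dec i j); [discriminate|].
      destruct (Nat.eq_dec (sigma i) (sigma j)) as [E|].
      * exfalso. apply n, Hinj; [lia | lia | exact E].
      * rewrite <- !Ha by lia. exact Hp.
Qed.

Lemma close_pairs_split G1 G2 a n0 N : (forall u w, G1 u w = true -> G2 u w = true) ->
  close_pairs G2 a n0 N
  = (close_pairs G1 a n0 N + close_pairs (fun u w => G2 u w && negb (G1 u w)) a n0 N)%nat.
Proof.
  intros H12. unfold close_pairs.
  rewrite (count_split (fun q : nat * nat =>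
             if Nat.eq_dec (fst q) (snd q) then false else G1 (a (fst q)) (a (snd q)))).
  - f_equal. apply count_ext. intros [i j]; simpl. now destruct (Nat.eq_dec i j).
  - intros [i j]; simpl. destruct (Nat.eq_dec i j); auto.
Qed.

Lemma close_pairs_ge_adjacent (a : nat -> R) N (p : nat -> bool) G :
  (forall t, (t < N - 1)%nat -> p t = true -> G (a (S t)) (a t) = true) ->
  (count p (seq 0 (N - 1)) <= close_pairs G a 0 N)%nat.
Proof.
  intros Hp. unfold close_pairs.
  eapply Nat.le_trans;
    [| apply count_ge_NoDup with (S := map (fun t => (S t, t)) (filter p (seq 0 (N - 1))))].
  - unfold count; now rewrite length_map.
  - apply NoDup_map_NoDup_ForallPairs; [|apply NoDup_filter, seq_NoDup].
    intros t t' _ _ E. now injection E.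
  - intros z Hz. apply in_map_iff in Hz. destruct Hz as [t [<- Ht]]. apply filter_In in Ht.
    destruct Ht as [Ht Hpt]. apply in_seq in Ht. split.
    + apply in_prod_iff; rewrite !in_seq; simpl; lia.
    + cbn [fst snd]. destruct (Nat.eq_dec (S t) t); [lia|]. apply Hp; [lia | exact Hpt].
Qed.

Lemma close_pairs_ge_windows (a : nat -> R) N M G : (forall u, G u u = true) ->
  (M * count (fun i => negb (existsb (changes_at a) (seq i M))) (seq 0 (N - M))
     <= close_pairs G a 0 N)%nat.
Proof.
  intros HG. unfold close_pairs.
  set (good := fun i => negb (existsb (changes_at a) (seq i M))).
  eapply Nat.le_trans; [| apply count_ge_NoDup with
    (S := map (fun q => ((fst q + snd q)%nat, fst q))
              (list_prod (filter good (seq 0 (N - M))) (seq 1 M)))].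
  - rewrite length_map, length_prod, length_seq. unfold count. lia.
  - apply NoDup_map_NoDup_ForallPairs;
      [|apply NoDup_list_prod; [apply NoDup_filter|]; apply seq_NoDup].
    intros [i r] [i' r'] _ _ E. simpl in E. injection E; intros. f_equal; lia.
  - intros z Hz. apply in_map_iff in Hz. destruct Hz as [[i r] [<- Hin]].
    apply in_prod_iff in Hin. destruct Hin as [Hi Hr].
    apply filter_In in Hi. destruct Hi as [Hi Hg].
    apply in_seq in Hi, Hr. simpl. split.
    + apply in_prod_iff; rewrite !in_seq; lia.
    + destruct (Nat.eq_dec (i + r) i); [lia|].
      unfold good in Hg. apply Bool.negb_true_iff in Hg.
      rewrite (window_constant a M i Hg r) by lia. apply HG.
Qed.

Lemma close_pairs_ge_coincidences (a : nat -> R) N M G :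
  (forall u, G u u = true) -> (M <= N)%nat ->
  (M * (N - M) <= close_pairs G a 0 N + M * (M * num_changes a N))%nat.
Proof.
  intros HG HMN. unfold num_changes.
  pose proof (count_negb (fun i => existsb (changes_at a) (seq i M)) (seq 0 (N - M))) as Hsplit.
  rewrite length_seq in Hsplit. cbv beta in Hsplit.
  pose proof (count_windows_with_change a M (N - M)) as Hbad.
  replace (N - M + M - 1)%nat with (N - 1)%nat in Hbad by lia.
  pose proof (close_pairs_ge_windows a N M G HG) as Hgood.
  nia.
Qed.

Lemma Int_part_unit d : 0 <= d < 1 -> Int_part d = 0%Z.
Proof.
  intros Hd. destruct (base_Int_part d) as [H1 H2].
  assert (Hlt : IZR (Int_part d) < IZR 1) by lra. apply lt_IZR in Hlt.
  assert (Hgt : IZR (-1) < IZR (Int_part d)) by lra. apply lt_IZR in Hgt. lia.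
Qed.

Lemma dist_int_unit d : 0 <= d < 1 -> dist_int d = Rmin d (1 - d).
Proof. intros Hd. unfold dist_int. rewrite Int_part_unit by exact Hd. f_equal; simpl; lra. Qed.

Lemma pair_close_refl s N u : 0 <= s -> (0 < N)%nat -> pair_close s N u u = true.
Proof.
  intros Hs HN. unfold pair_close. replace (u - u) with 0 by ring.
  rewrite dist_int_unit, Rmin_left by lra.
  destruct (Rle_dec 0 (s / INR N)) as [|Hn]; [reflexivity|].
  exfalso. apply Hn, Rdiv_le_0_compat; [exact Hs | now apply lt_0_INR].
Qed.

Lemma pair_close_mono s1 s2 N u v : s1 <= s2 -> (0 < N)%nat ->
  pair_close s1 N u v = true -> pair_close s2 N u v = true.
Proof.
  intros Hs HN. unfold pair_close.
  destruct (Rle_dec _ (s1 / INR N)) as [H1|]; [|discriminate].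
  destruct (Rle_dec _ (s2 / INR N)) as [|H2]; [reflexivity|].
  exfalso. apply H2. eapply Rle_trans; [exact H1|]. unfold Rdiv.
  apply Rmult_le_compat_r; [left; apply Rinv_0_lt_compat, lt_0_INR|]; assumption.
Qed.

Lemma pair_count_split x s1 s2 N : s1 <= s2 -> (0 < N)%nat ->
  pair_count x s2 N = (pair_count x s1 N + close_pairs (pair_between s1 s2 N) x 1 N)%nat.
Proof.
  intros Hs HN. rewrite !pair_count_close_pairs. apply close_pairs_split.
  intros u w. now apply pair_close_mono.
Qed.

Lemma Sorted_nth_succ {A : Type} (Rel : A -> A -> Prop) (d : A) (l : list A) : Sorted Rel l ->
  forall i, (S i < length l)%nat -> Rel (nth i l d) (nth (S i) l d).
Proof.
  induction l as [|u l IH]; intros Hs i Hi; simpl in Hi; [lia|].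
  destruct l as [|w l']; simpl in Hi; [lia|].
  inversion Hs as [|? ? Hs' Hhd]; subst. destruct i as [|i].
  - simpl. now inversion Hhd.
  - apply (IH Hs'). simpl; lia.
Qed.

Lemma sorted_rearrangement x N k : (forall n, 0 <= x n < 1) -> at_most_k_gap_lengths x N k ->
  exists (a : nat -> R) (L : list R), (length L <= k)%nat /\
    (forall G, (close_pairs G a 0 N <= close_pairs G x 1 N)%nat) /\
    (forall t, (S t < N)%nat -> a t <= a (S t)) /\
    (forall i, (i < N)%nat -> 0 <= a i < 1) /\
    (forall t, (S t < N)%nat -> In (dist_int (a (S t) - a t)) L).
Proof.
  intros x_range [y [Hperm [Hsort [L [HLk HL]]]]].
  assert (Hleny : length y = N) by now rewrite (Permutation_length Hperm), length_map, length_seq.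
  pose proof (proj1 (Permutation_nth _ _ 0) (Permutation_sym Hperm)) as Hnth. cbv zeta in Hnth.
  destruct Hnth as [_ [sigma [Hbound [Hinj Hsigma]]]].
  rewrite length_map, length_seq in Hbound, Hinj, Hsigma.
  set (a := fun i => nth i y 0).
  assert (Ha : forall i, (i < N)%nat -> a i = x (S (sigma i))).
  { intros i Hi. unfold a. rewrite Hsigma by exact Hi.
    rewrite (nth_indep _ 0 (x 0%nat)) by (rewrite length_map, length_seq; auto).
    now rewrite map_nth, seq_nth by auto. }
  exists a, L. split; [exact HLk|]. split; [|split; [|split]].
  - intros G. now apply (close_pairs_reindex x a sigma).
  - intros t Ht. apply Sorted_nth_succ; [exact Hsort | lia].
  - intros i Hi. rewrite Ha by exact Hi. apply x_range.
  - intros t Ht. specialize (HL t ltac:(lia)). unfold gap in HL.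
    rewrite Hleny, Nat.mod_small in HL by lia. now replace (t + 1)%nat with (S t) in HL by lia.
Qed.

Section SortedSample.

Variables (x a : nat -> R) (N : nat) (L : list R).
Hypothesis a_below_x : forall G, (close_pairs G a 0 N <= close_pairs G x 1 N)%nat.
Hypothesis a_step : forall t, (S t < N)%nat -> a t <= a (S t).
Hypothesis a_range : forall i, (i < N)%nat -> 0 <= a i < 1.
Hypothesis gaps_in_L : forall t, (S t < N)%nat -> In (dist_int (a (S t) - a t)) L.

Lemma dist_int_step t : (S t < N)%nat ->
  dist_int (a (S t) - a t) = Rmin (a (S t) - a t) (1 - (a (S t) - a t)).
Proof.
  intros Ht. apply dist_int_unit.
  pose proof (a_range t ltac:(lia)). pose proof (a_range (S t) Ht). pose proof (a_step t Ht). lra.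
Qed.

Lemma repeated_gap_jump : (0 < num_changes a N)%nat ->
  exists v m, 0 < v /\ INR m * v < 1 /\ (num_changes a N <= length L * m)%nat /\
    forall s1 s2, s1 < INR N * v <= s2 ->
      INR m <= INR (pair_count x s2 N) - INR (pair_count x s1 N).
Proof.
  unfold num_changes. intros Hchanges.
  set (g := fun t => dist_int (a (S t) - a t)).
  destruct (pigeonhole_count Req_EM_T (seq 0 (N - 1)) (changes_at a) g L) as [H0 | [v [_ Hv]]].
  { intros t Ht _. apply in_seq in Ht. apply gaps_in_L. lia. }
  { lia. }
  set (pv := fun t => changes_at a t && eqb_dec Req_EM_T (g t) v) in Hv.
  set (m := count pv (seq 0 (N - 1))) in Hv.
  assert (Hpv : forall t, In t (seq 0 (N - 1)) -> pv t = true ->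
            (S t < N)%nat /\ a t < a (S t) /\ g t = v).
  { intros t Ht Hpt. apply in_seq in Ht. unfold pv, changes_at, eqb_dec in Hpt.
    destruct (Req_EM_T (a t) (a (S t))), (Req_EM_T (g t) v); try discriminate.
    destruct (a_step t ltac:(lia)); [|contradiction]. repeat split; auto; lia. }
  assert (HN : (1 < N)%nat).
  { pose proof (filter_length_le (changes_at a) (seq 0 (N - 1))) as Hle.
    unfold count in Hchanges. rewrite length_seq in Hle. lia. }
  assert (HNpos : 0 < INR N) by (apply lt_0_INR; lia).
  exists v, m. repeat split.
  - destruct (count_pos_exists pv (seq 0 (N - 1))) as [t [Ht Hpt]]; [fold m; nia|].
    destruct (Hpv t Ht Hpt) as [Ht' [Hlt <-]]. unfold g. rewrite dist_int_step by exact Ht'.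
    pose proof (a_range t ltac:(lia)). pose proof (a_range (S t) Ht').
    apply Rmin_glb_lt; lra.
  - apply Rle_lt_trans with (a (N - 1)%nat - a 0%nat).
    + apply count_steps_telescope; [intros t Ht; apply a_step; lia|].
      intros t Ht Hpt. destruct (Hpv t ltac:(apply in_seq; lia) Hpt) as [Ht' [_ <-]].
      unfold g. rewrite dist_int_step by exact Ht'. apply Rmin_l.
    + pose proof (a_range (N - 1)%nat ltac:(lia)). pose proof (a_range 0%nat ltac:(lia)). lra.
  - exact Hv.
  - intros s1 s2 [Hs1 Hs2].
    rewrite (pair_count_split x s1 s2 N ltac:(lra) ltac:(lia)), plus_INR.
    enough (Hm : (m <= close_pairs (pair_between s1 s2 N) a 0 N)%nat).
    { apply le_INR in Hm. pose proof (le_INR _ _ (a_below_x (pair_between s1 s2 N))). lra. }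
    apply close_pairs_ge_adjacent. intros t Ht Hpt.
    destruct (Hpv t ltac:(apply in_seq; lia) Hpt) as [_ [_ Hgt]].
    unfold pair_between, pair_close. change (dist_int (a (S t) - a t)) with (g t). rewrite Hgt.
    destruct (Rle_dec v (s2 / INR N)) as [|Hn]; [|exfalso; apply Hn, Rle_div_r; lra].
    destruct (Rle_dec v (s1 / INR N)) as [Hn|]; [|reflexivity].
    exfalso. apply Rle_div_r in Hn; lra.
Qed.

Lemma changes_lower_bound (c : R) (M : nat) :
  INR (pair_count x 0 N) < c * INR N -> 4 * c < INR M -> (4 * M + 1 <= N)%nat ->
  INR N < 2 * INR M * INR (num_changes a N).
Proof.
  intros Hpc HcM HMN.
  set (P := num_changes a N).
  assert (Hco := close_pairs_ge_coincidences a N M (pair_close 0 N)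
                   (fun u => pair_close_refl 0 N u (Rle_refl 0) ltac:(lia)) ltac:(lia)).
  assert (Hx := a_below_x (pair_close 0 N)). rewrite <- pair_count_close_pairs in Hx. fold P in Hco.
  assert (HR : INR M * (INR N - INR M) <= INR (pair_count x 0 N) + INR M * (INR M * INR P)).
  { rewrite <- minus_INR by lia. rewrite <- !mult_INR, <- plus_INR. apply le_INR. lia. }
  assert (HNM : 4 * INR M + 1 <= INR N).
  { replace 4 with (INR 4) by (simpl; lra). rewrite <- mult_INR, <- S_INR. apply le_INR. lia. }
  pose proof (pos_INR (pair_count x 0 N)). pose proof (pos_INR P).
  pose proof (pos_INR M). assert (0 < INR N) by lra.
  assert (0 < c * INR N) by lra.
  assert (0 < c) by nra.
  destruct (Rlt_or_le (INR N) (2 * INR M * INR P)) as [|Hle]; [assumption | exfalso].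
  assert (INR M * (INR M * INR P) <= INR M * INR N / 2) by nra.
  assert (c * INR N < INR M * INR N / 4) by nra.
  nra.
Qed.

End SortedSample.

Lemma uniformly_continuous_on_nonneg (f : R -> R) :
  (forall s, 0 <= s -> forall eps, 0 < eps -> exists delta, 0 < delta /\
     forall t, 0 <= t -> Rabs (t - s) < delta -> Rabs (f t - f s) < eps) ->
  forall B eps, 0 < eps -> exists delta, 0 < delta /\
    forall s t, 0 <= s <= B -> 0 <= t <= B -> Rabs (s - t) < delta -> Rabs (f s - f t) < eps.
Proof.
  intros f_cont B eps Heps.
  (* [f] is only right-continuous at [0]; extended by [f 0] to the left, it is
     continuous at every point of [0, B]. *)
  assert (Hcont : forall s, 0 <= s <= B -> continuity_pt (fun t => f (Rmax t 0)) s).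
  { intros s [Hs _] e He. destruct (f_cont s Hs e He) as [d [Hd Hd']].
    exists d; split; [exact Hd|]. intros t [_ Ht]. simpl in *. unfold R_dist in *.
    rewrite (Rmax_left s 0) by lra. apply Hd'; [apply Rmax_r|].
    apply Rabs_def2 in Ht. apply Rabs_def1; unfold Rmax; destruct (Rle_dec t 0); lra. }
  destruct (Heine_cor2 Hcont (mkposreal eps Heps)) as [delta Hdelta].
  exists delta. split; [apply cond_pos|]. intros s t Hs Ht Hst.
  specialize (Hdelta s t Hs Ht Hst). simpl in Hdelta. now rewrite !Rmax_left in Hdelta by lra.
Qed.

Lemma eventually_all_close (u : nat -> nat -> R) (l : nat -> R) (J : nat) (eps : R) : 0 < eps ->
  (forall j, (j <= J)%nat -> is_lim_seq (u j) (l j)) ->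
  exists N1, forall N, (N1 <= N)%nat -> forall j, (j <= J)%nat -> Rabs (u j N - l j) < eps.
Proof.
  intros Heps Hlim. induction J as [|J IH].
  - destruct (proj2 (is_lim_seq_spec _ _) (Hlim 0%nat (le_n 0)) (mkposreal eps Heps)) as [N1 HN1].
    exists N1. intros N HN j Hj. replace j with 0%nat by lia. now apply HN1.
  - destruct IH as [N1 HN1]; [intros j Hj; apply Hlim; lia|].
    destruct (proj2 (is_lim_seq_spec _ _) (Hlim (S J) (le_n _)) (mkposreal eps Heps)) as [N2 HN2].
    exists (Nat.max N1 N2). intros N HN j Hj. destruct (Nat.eq_dec j (S J)) as [->|].
    + apply HN2; lia.
    + apply HN1; lia.
Qed.

Lemma grid_bracket (s h : R) (J : nat) : 0 < s -> 0 < h -> s <= INR J * h ->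
  exists j, (j < J)%nat /\ INR j * h < s <= INR (S j) * h.
Proof.
  intros Hs Hh. induction J as [|J IH]; intros HJ; [simpl in HJ; lra|].
  destruct (Rle_dec s (INR J * h)) as [Hle|Hgt].
  - destruct (IH Hle) as [j [Hj Hjs]]. exists j. split; [lia | exact Hjs].
  - exists J. split; [lia | lra].
Qed.

Section PairCorrelationLimit.

Variables (f : R -> R) (x : nat -> R).
Hypothesis x_pc : has_f_pair_correlations f x.

Lemma pair_count_eventually_lt s c : 0 <= s -> f s < c ->
  exists N0, forall N, (N0 <= N)%nat -> INR (pair_count x s N) < c * INR N.
Proof.
  intros Hs Hc.
  destruct (proj2 (is_lim_seq_spec _ _) (x_pc s Hs) (mkposreal (c - f s) ltac:(lra))) as [N0 HN0].
  exists (S N0). intros N HN. specialize (HN0 N ltac:(lia)). simpl in HN0. apply Rabs_def2 in HN0.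
  apply Rlt_div_l; [apply lt_0_INR; lia | lra].
Qed.

Hypothesis f_cont : forall s, 0 <= s -> forall eps, 0 < eps -> exists delta, 0 < delta /\
  forall t, 0 <= t -> Rabs (t - s) < delta -> Rabs (f t - f s) < eps.

Lemma pair_count_increments_small B eps : 0 < eps ->
  exists N1, forall N, (N1 <= N)%nat -> forall s, 0 < s <= B ->
    exists s1 s2, s1 < s <= s2 /\ INR (pair_count x s2 N) - INR (pair_count x s1 N) < eps * INR N.
Proof.
  intros Heps.
  destruct (uniformly_continuous_on_nonneg f f_cont (B + 1) (eps / 2)) as [delta [Hdelta Hunif]];
    [lra|].
  set (h := Rmin delta 1 / 2).
  assert (Hh : 0 < h /\ h <= 1 / 2 /\ h < delta) by (unfold h, Rmin; destruct Rle_dec; lra).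
  destruct (INR_unbounded (B / h)) as [J HJ].
  assert (HJh : B <= INR J * h) by (apply Rlt_le, Rlt_div_l; lra).
  destruct (eventually_all_close (fun j N => INR (pair_count x (INR j * h) N) / INR N)
              (fun j => f (INR j * h)) (S J) (eps / 4)) as [N1 HN1]; [lra| |].
  { intros j _. apply x_pc. pose proof (pos_INR j). nra. }
  exists (S N1). intros N HN s [Hs HsB].
  destruct (grid_bracket s h J Hs ltac:(lra) ltac:(lra)) as [j [Hj [Hjs Hsj]]].
  exists (INR j * h), (INR (S j) * h). split; [lra|].
  pose proof (HN1 N ltac:(lia) j ltac:(lia)) as H1.
  pose proof (HN1 N ltac:(lia) (S j) ltac:(lia)) as H2.
  cbv beta in H1, H2. rewrite S_INR in *.
  assert (Hf : Rabs (f ((INR j + 1) * h) - f (INR j * h)) < eps / 2).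
  { pose proof (pos_INR j). apply Hunif; try split; try nra.
    replace ((INR j + 1) * h - INR j * h) with h by ring. rewrite Rabs_pos_eq; lra. }
  apply Rabs_def2 in H1, H2, Hf.
  assert (HNpos : 0 < INR N) by (apply lt_0_INR; lia).
  assert (Hdiff : INR (pair_count x ((INR j + 1) * h) N) / INR N
                  - INR (pair_count x (INR j * h) N) / INR N < eps) by lra.
  unfold Rminus in Hdiff. rewrite <- Rdiv_opp_l, <- Rdiv_plus_distr in Hdiff.
  now apply Rlt_div_l in Hdiff.
Qed.

End PairCorrelationLimit.

Theorem theorem2 (f : R -> R) (x : nat -> R)
  (f_nonneg : forall s : R, 0 <= s -> 0 <= f s)
  (f_cont : forall s : R, 0 <= s -> forall eps : R, 0 < eps ->
     exists delta : R, 0 < delta /\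
       forall t : R, 0 <= t -> Rabs (t - s) < delta -> Rabs (f t - f s) < eps)
  (f_mono : forall s t : R, 0 <= s -> s <= t -> f s <= f t)
  (x_range : forall n : nat, 0 <= x n < 1)
  (gaps : exists k : nat, forall M : nat, exists N : nat,
     (M <= N)%nat /\ at_most_k_gap_lengths x N k) :
  ~ has_f_pair_correlations f x.
Proof.
  destruct gaps as [k Hk]. intros Hpc.
  pose proof (f_nonneg 0 (Rle_refl 0)) as Hf0.
  destruct (INR_unbounded (4 * (f 0 + 1))) as [M HM].
  set (c := 2 * INR M * INR (S k)).
  assert (Hc : 0 < c) by (unfold c; pose proof (lt_0_INR (S k) (Nat.lt_0_succ k)); nra).
  destruct (pair_count_eventually_lt f x Hpc 0 (f 0 + 1)) as [N0 HN0]; [lra | lra |].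
  destruct (pair_count_increments_small f x Hpc f_cont c (/ c)) as [N1 HN1];
    [now apply Rinv_0_lt_compat|].
  destruct (Hk (Nat.max N0 (Nat.max N1 (4 * M + 1)))) as [N [HN Hgap]].
  destruct (sorted_rearrangement x N k x_range Hgap) as [a [L [HLk [Hax [Hstep [Hrange HL]]]]]].
  assert (HNpos : 0 < INR N) by (apply lt_0_INR; lia).
  pose proof (changes_lower_bound x a N Hax (f 0 + 1) M (HN0 N ltac:(lia)) HM ltac:(lia)) as HP.
  destruct (repeated_gap_jump x a N L Hax Hstep Hrange HL) as [v [m [Hv [Hmv [HPm Hjump]]]]].
  { apply INR_lt. change (INR 0) with 0. pose proof (pos_INR M). nra. }
  assert (Hcm : INR N < c * INR m).
  { assert (HPk : INR (num_changes a N) <= INR (S k) * INR m)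
      by (rewrite <- mult_INR; apply le_INR; nia).
    replace (c * INR m) with (2 * INR M * (INR (S k) * INR m)) by (unfold c; ring).
    pose proof (pos_INR M). pose proof (Rmult_le_compat_l (2 * INR M) _ _ ltac:(lra) HPk). lra. }
  assert (Hs : 0 < INR N * v <= c).
  { split; [nra|]. assert (INR N * v < c * INR m * v) by (apply Rmult_lt_compat_r; lra). nra. }
  destruct (HN1 N ltac:(lia) (INR N * v) Hs) as [s1 [s2 [Hs12 Hinc]]].
  pose proof (Hjump s1 s2 Hs12) as Hjump12.
  assert (Hmc : INR m * c < INR N) by (apply Rlt_div_r; [exact Hc | unfold Rdiv; lra]).
  lra.
Qed.
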